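(* Let $\mathcal R$ be a finite set of existential rules. Then, as graphs on the same node set, $PG^U(\mathcal R) \subseteq PG^D(\mathcal R) \subseteq PG^F(\mathcal R)$ (every edge of $PG^U(\mathcal R)$ is an edge of $PG^D(\mathcal R)$, and every edge of $PG^D(\mathcal R)$ is an edge of $PG^F(\mathcal R)$). Furthermore, if the transitive closure of $GRD(\mathcal R)$ is a complete graph, then $PG^D(\mathcal R) = PG^F(\mathcal R)$.
   Context: Vocabulary: predicates, constants, variables, no other function symbols. An atom is $p(t_1,\dots,t_k)$ with $t_i$ terms (variables or constants); an atomset is a finite set of atoms. A homomorphism from atomset $A$ to atomset $F$ is a substitution $\sigma$ of the variables of $A$ by terms with $\sigma(A)\subseteq F$. An existential rule $R: B\to H$ consists of atomsets $B$ (body) and $H$ (head), read as $\forall \vec x\forall\vec y(B\to\exists\vec z\, H)$; frontier variables are those in both $B$ and $H$, existential variables those only in $H$. Distinct rules share no variables. $R$ is applicable to $F$ via a homomorphism $\pi:B\to F$, and $\alpha(F,R,\pi)=F\cup\pi(\mathrm{safe}(H))$, where $\mathrm{safe}(H)$ renames existential variables by fresh variables. A homomorphism $\pi'$ from a body $B_j$ to $\alpha(F,R_i,\pi)$ is new if $\pi'(B_j)\not\subseteq F$, and useful if it cannot be extended to a homomorphism from $B_j\cup H_j$ to $\alpha(F,R_i,\pi)$. Rule $R_j$ depends on $R_i$ if there is an atomset $F$ and homomorphism $\pi$ with $R_i$ applicable to $F$ by $\pi$ and $R_j$ applicable to $\alpha(F,R_i,\pi)$ by a new useful homomorphism. The graph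 of rule dependencies $GRD(\mathcal R)$ has node set $\mathcal R$ and an edge $(R_i,R_j)$ iff $R_j$ depends on $R_i$. A piece-unifier of a body $B_2$ with a head $H_1$ is a substitution $\mu$ of $\mathrm{vars}(B_2')\cup\mathrm{vars}(H_1')$, for some nonempty $B_2'\subseteq B_2$ and $H_1'\subseteq H_1$, such that $\mu(B_2')=\mu(H_1')$ and no variable of $B_2'$ that is unified with an existential variable of $H_1'$ occurs in $B_2\setminus B_2'$. Positions: for an atom $a=p(t_1,\dots,t_k)$, $[a,i]$ denotes its $i$-th position, with $\mathrm{pred}([a,i])=p$ and $\mathrm{term}([a,i])=t_i$; it is existential (resp. frontier) if $t_i$ is an existential (resp. frontier) variable. The basic position graph $PG(R)$ of $R:B\to H$ has a node for each position in an atom of $B$ or $H$, and an edge from each frontier position $[b,i]$ in $B$ to each position $[h,j]$ in $H$ such that $\mathrm{term}([b,i])=\mathrm{term}([h,j])$ or $[h,j]$ is existential. $PG(\mathcal R)$ is the disjoint union of the $PG(R)$, $R\in\mathcal R$. The graphs $PG^F(\mathcal R)$, $PG^D(\mathcal R)$, $PG^U(\mathcal R)$ are obtained from $PG(\mathcal R)$ by adding a transition edge from each $k$-th position $[h,k]$ in a head $H_i$ to each $k$-th position $[b,k]$ in a body $B_j$ with the same predicate, provided: (F) no condition; (D) there is a path from $R_i$ to $R_j$ in $GRD(\mathcal R)$; (U) there is a piece-unifier $\mu$ of $B_j$ with the head of an agglomerated rule $R_i^j$ such that $\mu(\mathrm{term}([b,k]))=\mu(\mathrm{term}([h,k]))$.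 Agglomerated rule: let $\mathrm{fr}$ be a fresh unary predicate. Let $\mathcal P$ be a nonempty set of paths in $GRD(\mathcal R)$ from $R_i$ to direct predecessors of $R_j$. For a path $P=(R_1,\dots,R_n)$ (with $R_1=R_i$) build $R^p_1=R_1,\dots,R^p_n=R^P$ where for $1\le l<n$ there is a piece-unifier $\mu_l$ of $B_{l+1}$ with the head of $R^p_l$, the body of $R^p_{l+1}$ is the body of $R^p_l$ together with $\{\mathrm{fr}(t)\mid t$ a term of the head of $R^p_l$ unified in $\mu_l\}$, and the head of $R^p_{l+1}$ is $H_1$. An agglomerated rule associated with $(R_i,R_j)$ is $R_i^j=\bigcup_{P\in\mathcal P}R^P$, i.e. of the form $B_i\cup\{\mathrm{fr}(t)\mid t\in T\}\to H_i$ for some $T\subseteq\mathrm{terms}(H_i)$. *)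

From mathcomp Require Import all_boot.
From Stdlib Require Import Relations.Relation_Operators.

Set Implicit Arguments.
Unset Strict Implicit.
Unset Printing Implicit Defensive.

(* A term is a variable (inl v) or a constant (inr c).                 *)
(* An atomset is a finite set, represented by a list (read as a set).  *)
Definition var := nat.
Definition term := (var + nat)%type.
Definition atom := (nat * seq term)%type.
Definition atomset := seq atom.

Definition vars_term (t : term) : seq var :=
  match t with inl v => [:: v] | inr _ => [::] end.
Definition vars_atom (a : atom) : seq var := flatten (map vars_term a.2).
Definition vars (A : atomset) : seq var := flatten (map vars_atom A).
Definition terms (A : atomset) : seq term := flatten (map snd A).

Definition subst := var -> term.
Definition subst_term (s : subst) (t : term) : term :=
  match t with inl v => s v | inr c => inr c end.
Definition subst_atom (s : subst) (a : atom) : atom := (a.1, map (subst_term s) a.2).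

Definition hom (s : subst) (A F : atomset) : Prop :=
  forall a, a \in A -> subst_atom s a \in F.

Definition rule := (atomset * atomset)%type.
Definition body (r : rule) : atomset := r.1.
Definition head (r : rule) : atomset := r.2.
Definition rule_vars (r : rule) : seq var := vars (body r) ++ vars (head r).

Definition frontier (r : rule) (v : var) : Prop :=
  v \in vars (body r) /\ v \in vars (head r).
Definition existential (r : rule) (v : var) : Prop :=
  v \in vars (head r) /\ v \notin vars (body r).

Definition rnth (R : seq rule) (i : nat) : rule := nth ([::], [::]) R i.

Definition rules_var_disjoint (R : seq rule) : Prop :=
  forall i j v, i < size R -> j < size R -> i <> j ->
    v \in rule_vars (rnth R i) -> v \notin rule_vars (rnth R j).

(* Rule application: alpha(F, r, pi) = F u pi(safe(H)).              *)
(* safe(H) renames the existential variables of H injectively by      *)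
(* variables rho v that are fresh (do not occur in F).                  *)
Definition fresh_renaming (r : rule) (F : atomset) (rho : var -> var) : Prop :=
  (forall x y, existential r x -> existential r y -> rho x = rho y -> x = y) /\
  (forall x, existential r x -> rho x \notin vars F).

Definition safe_subst (r : rule) (pi : subst) (rho : var -> var) : subst :=
  fun v => if v \in vars (body r) then pi v else inl (rho v).

Definition alpha (F : atomset) (r : rule) (pi : subst) (rho : var -> var) : atomset :=
  F ++ map (subst_atom (safe_subst r pi rho)) (head r).

Definition applicable (r : rule) (F : atomset) (pi : subst) : Prop :=
  hom pi (body r) F.

(* Rule dependency: rule j depends on rule i. *)
Definition depends (R : seq rule) (i j : nat) : Prop :=
  i < size R /\ j < size R /\
  exists (F : atomset) (pi : subst) (rho : var -> var) (pi' : subst),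
    applicable (rnth R i) F pi /\ fresh_renaming (rnth R i) F rho /\
    let A := alpha F (rnth R i) pi rho in
    hom pi' (body (rnth R j)) A /\
    ~ hom pi' (body (rnth R j)) F /\
    ~ (exists s : subst, (forall v, v \in vars (body (rnth R j)) -> s v = pi' v) /\
                         hom s (body (rnth R j) ++ head (rnth R j)) A).

(* Edge (i, j) of GRD(R) is  depends R i j. *)

(* The body and the head are renamed apart: mu2 acts on the variables    *)
(* of B2', mu1 on those of H1' (this is a single substitution when, as   *)
(* for distinct rules, they share no variable).            *)
Definition piece_unifier_with (B2 : atomset) (r : rule)
    (B2' H1' : atomset) (mu2 mu1 : subst) : Prop :=
  B2' != [::] /\ {subset B2' <= B2} /\ {subset H1' <= head r} /\
  (forall v, v \notin vars B2' -> mu2 v = inl v) /\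
  (forall v, v \notin vars H1' -> mu1 v = inl v) /\
  map (subst_atom mu2) B2' =i map (subst_atom mu1) H1' /\
  (forall x z, x \in vars B2' -> z \in vars H1' -> existential r z ->
     mu2 x = mu1 z ->
     forall a, a \in B2 -> a \notin B2' -> x \notin vars_atom a).

Definition piece_unifier (B2 : atomset) (r : rule) (mu2 mu1 : subst) : Prop :=
  exists B2' H1', piece_unifier_with B2 r B2' H1' mu2 mu1.

(* The fresh unary predicate fr: one more than every predicate of R. *)
Definition fr_pred (R : seq rule) : nat :=
  (\max_(r <- R) \max_(a <- body r ++ head r) a.1).+1.
Definition fr_atom (R : seq rule) (t : term) : atom := (fr_pred R, [:: t]).

(* Paths in GRD(R): i :: rest, consecutive dependencies. *)
Fixpoint grd_path (R : seq rule) (i : nat) (rest : seq nat) : Prop :=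
  match rest with
  | [::] => i < size R
  | k :: rest' => depends R i k /\ grd_path R k rest'
  end.

(* agg_build R H B0 rest B: starting from the rule B0 -> H (= R^p_l),
   following the remaining path rest = R_{l+1},...,R_n, one can reach a
   rule B -> H (= R^P). *)
Inductive agg_build (R : seq rule) (H : atomset) : atomset -> seq nat -> atomset -> Prop :=
  | agg_nil B0 : agg_build R H B0 [::] B0
  | agg_cons B0 k rest B B2' H1' mu2 mu1 :
      piece_unifier_with (body (rnth R k)) (B0, H) B2' H1' mu2 mu1 ->
      agg_build R H (B0 ++ map (fr_atom R) (terms H1')) rest B ->
      agg_build R H B0 (k :: rest) B.

(* r is an agglomerated rule associated with (R_i, R_j): the union of the
   R^P over a nonempty set of paths P from R_i to direct predecessors of
   R_j.  Each element of PB is (rest, B) with P = i :: rest and R^P = B -> H_i. *)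
Definition agglomerated (R : seq rule) (i j : nat) (r : rule) : Prop :=
  exists PB : seq (seq nat * atomset),
    PB != [::] /\
    (forall pb, pb \in PB ->
       [/\ grd_path R i pb.1, depends R (last i pb.1) j &
           agg_build R (head (rnth R i)) (body (rnth R i)) pb.1 pb.2]) /\
    r = (flatten (map snd PB), head (rnth R i)).

(* A node (i, h, a, k) is the k-th position (0-based) of atom a in the  *)
(* head (h = true) or body (h = false) of rule number i.                *)
Definition node := (nat * bool * atom * nat)%type.
Definition n_rule (n : node) : nat := n.1.1.1.
Definition n_head (n : node) : bool := n.1.1.2.
Definition n_atom (n : node) : atom := n.1.2.
Definition n_pos (n : node) : nat := n.2.
Definition n_term (n : node) : term := nth (inr 0) (n_atom n).2 (n_pos n).
Definition n_pred (n : node) : nat := (n_atom n).1.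

Definition is_node (R : seq rule) (n : node) : Prop :=
  n_rule n < size R /\
  n_atom n \in (if n_head n then head (rnth R (n_rule n)) else body (rnth R (n_rule n))) /\
  n_pos n < size (n_atom n).2.

Definition term_is_frontier (r : rule) (t : term) : Prop :=
  exists v, t = inl v /\ frontier r v.
Definition term_is_existential (r : rule) (t : term) : Prop :=
  exists v, t = inl v /\ existential r v.

Definition pg_edge (R : seq rule) (n m : node) : Prop :=
  is_node R n /\ is_node R m /\
  n_head n = false /\ n_head m = true /\ n_rule n = n_rule m /\
  term_is_frontier (rnth R (n_rule n)) (n_term n) /\
  (n_term n = n_term m \/ term_is_existential (rnth R (n_rule m)) (n_term m)).

Definition transition (R : seq rule) (n m : node) : Prop :=
  is_node R n /\ is_node R m /\
  n_head n = true /\ n_head m = false /\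
  n_pos n = n_pos m /\ n_pred n = n_pred m.

Definition cond_F (R : seq rule) (n m : node) : Prop := True.
Definition cond_D (R : seq rule) (n m : node) : Prop :=
  clos_trans nat (depends R) (n_rule n) (n_rule m).
Definition cond_U (R : seq rule) (n m : node) : Prop :=
  exists (r : rule) (mu2 mu1 : subst),
    agglomerated R (n_rule n) (n_rule m) r /\
    piece_unifier (body (rnth R (n_rule m))) r mu2 mu1 /\
    subst_term mu2 (n_term m) = subst_term mu1 (n_term n).

Definition PG_F (R : seq rule) (n m : node) : Prop :=
  pg_edge R n m \/ (transition R n m /\ cond_F R n m).
Definition PG_D (R : seq rule) (n m : node) : Prop :=
  pg_edge R n m \/ (transition R n m /\ cond_D R n m).
Definition PG_U (R : seq rule) (n m : node) : Prop :=
  pg_edge R n m \/ (transition R n m /\ cond_U R n m).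

(* An agglomerated rule for (R_i, R_j) is built along at least one GRD path
   from R_i to a direct predecessor of R_j, so a unifier condition (U) on a
   transition edge forces a GRD path from R_i to R_j, which is condition (D);
   condition (F) is void.  When every pair of rules is linked by a GRD path,
   (D) holds for every transition edge, so PG^D and PG^F coincide. *)
From mathcomp Require Import all_boot.
From Stdlib Require Import Relations.Relation_Operators.

Lemma grd_path_clos_trans (R : seq rule) (rest : seq nat) (i j : nat) :
  grd_path R i rest -> depends R (last i rest) j ->
  clos_trans nat (depends R) i j.
Proof.
elim: rest i => [|k rest IH] i /=; first by move=> _; exact: t_step.
move=> [dep_ik path_k] dep_last.
exact: t_trans (t_step _ _ _ _ dep_ik) (IH k path_k dep_last).
Qed.

Lemma agglomerated_clos_trans (R : seq rule) (i j : nat) (r : rule) :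
  agglomerated R i j r -> clos_trans nat (depends R) i j.
Proof.
case=> [[|pb PB] [//= _ [agg_paths _]]].
have [path_pb dep_last _] := agg_paths pb (mem_head _ _).
exact: grd_path_clos_trans path_pb dep_last.
Qed.

Lemma cond_U_cond_D (R : seq rule) (n m : node) :
  cond_U R n m -> cond_D R n m.
Proof. by case=> r [mu2 [mu1 [/agglomerated_clos_trans]]]. Qed.

Lemma cond_D_complete (R : seq rule) (n m : node) :
  (forall i j, i < size R -> j < size R -> clos_trans nat (depends R) i j) ->
  transition R n m -> cond_D R n m.
Proof. by move=> complete [[n_lt _] [[m_lt _] _]]; exact: complete. Qed.

Lemma PG_U_PG_D (R : seq rule) (n m : node) : PG_U R n m -> PG_D R n m.
Proof. by case=> [pg | [tr /cond_U_cond_D cD]]; [left | right]. Qed.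

Lemma PG_D_PG_F (R : seq rule) (n m : node) : PG_D R n m -> PG_F R n m.
Proof. by case=> [pg | [tr _]]; [left | right]. Qed.

Lemma PG_F_PG_D_complete (R : seq rule) (n m : node) :
  (forall i j, i < size R -> j < size R -> clos_trans nat (depends R) i j) ->
  PG_F R n m -> PG_D R n m.
Proof.
move=> complete [pg | [tr _]]; first by left.
by right; split; last exact: cond_D_complete.
Qed.

Theorem mainTheorem1 (R : seq rule) (HR : uniq R) (Hdisj : rules_var_disjoint R) :
  (forall n m : node, PG_U R n m -> PG_D R n m) /\
  (forall n m : node, PG_D R n m -> PG_F R n m) /\
  ((forall i j, i < size R -> j < size R -> clos_trans nat (depends R) i j) ->
   forall n m : node, PG_D R n m <-> PG_F R n m).
Proof.
split; first exact: PG_U_PG_D.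
split; first exact: PG_D_PG_F.
move=> complete n m; split; first exact: PG_D_PG_F.
exact: PG_F_PG_D_complete.
Qed.
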